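(* Let $(X,\rho,\mu)$ be a $K$-doubling metric measure space, let $U\subseteq X$ be nonempty and let $x$ be a $\mu$-interior point of $U$. Then there exists a map $r_x\colon X\to U$ such that $r_x(y)=y$ for all $y\in U$ and $\rho\big(y,r_x(y)\big)=o\big(\rho(y,x)\big)$ as $y\to x$.
   Context: A $K$-doubling metric measure space ($K>0$) is a triple $(X,\rho,\mu)$ where $(X,\rho)$ is a complete separable metric space and $\mu$ is a Borel-regular outer measure on $X$ with $0<\mu(B_{2r}(x))\le K\mu(B_r(x))<+\infty$ for all $x\in X$, $r>0$. A point $x\in U$ is a $\mu$-interior point of $U$ if there is a Borel set $B\subseteq U$ with $\lim_{r\to0^+}\mu(B_r(x)\setminus B)/\mu(B_r(x))=0$. *)

From HB Require Import structures.
From mathcomp Require Import all_boot all_order all_algebra.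
From mathcomp Require Import all_classical all_reals all_analysis.
Set Implicit Arguments. Unset Strict Implicit. Unset Printing Implicit Defensive.
Import Order.TTheory GRing.Theory Num.Theory.
Local Open Scope classical_set_scope.
Local Open Scope ring_scope.

Definition is_metric (R : realType) (X : Type) (rho : X -> X -> R) : Prop :=
  [/\ forall x y, 0 <= rho x y,
      forall x y, rho x y = 0 <-> x = y,
      forall x y, rho x y = rho y x
    & forall x y z, rho x z <= rho x y + rho y z].

Definition mball (R : realType) (X : Type) (rho : X -> X -> R) (x : X) (r : R)
  : set X := [set y | rho x y < r].

Definition metric_complete (R : realType) (X : Type) (rho : X -> X -> R) : Prop :=
  forall u : nat -> X,
    (forall eps : R, 0 < eps -> exists N : nat, forall m n : nat,
        (N <= m)%N -> (N <= n)%N -> rho (u m) (u n) < eps) ->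
    exists l : X, forall eps : R, 0 < eps -> exists N : nat, forall n : nat,
        (N <= n)%N -> rho (u n) l < eps.

Definition metric_separable (R : realType) (X : Type) (rho : X -> X -> R) : Prop :=
  exists D : set X, countable D /\
    forall (x : X) (eps : R), 0 < eps -> exists2 d, D d & rho x d < eps.

Definition metric_open (R : realType) (X : Type) (rho : X -> X -> R) (U : set X)
  : Prop := forall x, U x -> exists2 r : R, 0 < r & mball rho x r `<=` U.

Definition metric_borel (R : realType) (X : Type) (rho : X -> X -> R) : set (set X) :=
  <<s [set U | metric_open rho U] >>.

Definition borel_regular (R : realType) (X : Type) (rho : X -> X -> R)
  (mu : {outer_measure set X -> \bar R}) : Prop :=
  (forall B, metric_borel rho B -> mu.-caratheodory B) /\
  (forall A : set X, exists B, [/\ metric_borel rho B, A `<=` B & mu B = mu A]).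

Definition doubling_mms (R : realType) (X : Type) (K : R) (rho : X -> X -> R)
  (mu : {outer_measure set X -> \bar R}) : Prop :=
  [/\ 0 < K, is_metric rho, metric_complete rho /\ metric_separable rho,
      borel_regular rho mu &
      forall (x : X) (r : R), 0 < r ->
        [/\ (0 < mu (mball rho x r))%E,
            (mu (mball rho x (2 * r)) <= K%:E * mu (mball rho x r))%E &
            (mu (mball rho x r) < +oo)%E]].

Definition mu_interior_point (R : realType) (X : Type) (rho : X -> X -> R)
  (mu : {outer_measure set X -> \bar R}) (U : set X) (x : X) : Prop :=
  U x /\
  exists B : set X, [/\ metric_borel rho B, B `<=` U &
    (fun r : R => fine (mu (mball rho x r `\` B)) / fine (mu (mball rho x r)))
      @ 0%R^'+ --> (0%R : R^o)].

From HB Require Import structures.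
From mathcomp Require Import all_boot all_order all_algebra.
From mathcomp Require Import all_classical all_reals all_analysis.
From mathcomp Require Import lra.
Set Implicit Arguments.
Unset Strict Implicit.
Unset Printing Implicit Defensive.
Import Order.TTheory GRing.Theory Num.Theory.
Local Open Scope classical_set_scope.
Local Open Scope ring_scope.

(** Let [B ⊆ U] be a Borel set of density one at [x].  If a point
    [y] at distance [d] from [x] had no point of [B] within [eps d], the ball
    [B(y, eps d) ⊆ B(x, (1 + eps) d) \ B] would, by doubling, carry a fixed
    fraction of the measure of [B(x, (1 + eps) d)], contradicting density one
    for small [d].  Hence the distance from [y] to [U] is [o(d)], and sending
    each [y ∉ U] to a point of [U] that is nearest up to an error [d^2] gives
    the retraction. *)

Lemma near_right0_interval (R : realType) (P : R -> Prop) :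
  (\forall t \near 0^'+, P t) -> exists2 e : R, 0 < e & forall t, 0 < t < e -> P t.
Proof.
rewrite near_withinE => /nbhs_normP [e e0 He].
exists e => // t /andP[t0 te]; apply: He => //=.
by rewrite sub0r normrN gtr0_norm.
Qed.

Lemma invr_le_fine_ratio (R : realType) (a b : \bar R) (c : R) : 0 < c ->
  (0 <= a)%E -> (a <= b)%E -> (0 < b)%E -> (b < +oo)%E -> (b <= c%:E * a)%E ->
  c^-1 <= fine a / fine b.
Proof.
move: a b => [a| |] [b| |] //= c0; rewrite ?lee_fin ?lte_fin // => _ _ b0 _ bca.
by rewrite ler_pdivlMr // ler_pdivrMl.
Qed.

Section doubling_density.
Variables (R : realType) (X : Type) (K : R) (rho : X -> X -> R).
Variable mu : {outer_measure set X -> \bar R}.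
Hypothesis K_gt0 : 0 < K.
Hypothesis rho_metric : is_metric rho.
Hypothesis mu_ball : forall (x : X) (r : R), 0 < r ->
  [/\ (0 < mu (mball rho x r))%E,
      (mu (mball rho x (2 * r)) <= K%:E * mu (mball rho x r))%E &
      (mu (mball rho x r) < +oo)%E].

Lemma mu_ball_double_iter (y : X) (t : R) (k : nat) : 0 < t ->
  (mu (mball rho y (2 ^+ k * t)) <= (K ^+ k)%:E * mu (mball rho y t))%E.
Proof.
move=> t0; elim: k => [|k IH]; first by rewrite expr0 mul1r mul1e.
have [_ double _] := mu_ball y (mulr_gt0 (exprn_gt0 k (ltr0Sn R 1)) t0).
rewrite exprS -mulrA; apply: le_trans double _.
by rewrite exprS EFinM -muleA lee_wpmul2l // lee_fin ltW.
Qed.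

Lemma density_point_approx (B : set X) (x : X) :
  (fun r : R => fine (mu (mball rho x r `\` B)) / fine (mu (mball rho x r)))
    @ 0%R^'+ --> (0%R : R^o) ->
  forall eps : R, 0 < eps -> exists2 delta : R, 0 < delta &
    forall y, 0 < rho y x < delta -> exists2 z, B z & rho y z <= eps * rho y x.
Proof.
move=> density1 eps eps0; have [rho_ge0 _ rhoC rho_tri] := rho_metric.
set m := Num.bound ((2 + eps) / eps).
have m_big : 2 + eps < 2 ^+ m * eps by rewrite -ltr_pdivrMr // upper_nthrootP.
have Km_gt0 : 0 < (K ^+ m)^-1 by rewrite invr_gt0 exprn_gt0.
have [e e0 ratio_small] := near_right0_interval (cvgr_lt _ density1 _ Km_gt0).
exists (e / (1 + eps)); first by rewrite divr_gt0 // addr_gt0.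
move=> y /andP[]; set d := rho y x => d0 de; apply: contrapT => noB.
set r := (1 + eps) * d.
have r0 : 0 < r by rewrite mulr_gt0 // addr_gt0.
have re : r < e by rewrite /r mulrC -ltr_pdivlMr // addr_gt0.
have ball_y_sub : mball rho y (eps * d) `<=` mball rho x r `\` B.
  move=> z yz; split; last by move=> Bz; apply: noB; exists z => //; apply: ltW.
  apply: le_lt_trans (rho_tri x y z) _.
  by move: yz; rewrite rhoC -/d /r /mball /=; lra.
have ball_x_sub : mball rho x r `<=` mball rho y (2 ^+ m * (eps * d)).
  move=> z xz; apply: le_lt_trans (rho_tri y x z) _; rewrite -/d /=.
  by move: xz; rewrite /mball /r /=; nra.
have [b_gt0 _ b_fin] := mu_ball x r0.
have mu_le : (mu (mball rho x r) <= (K ^+ m)%:E * mu (mball rho x r `\` B))%E.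
  apply: le_trans (le_outer_measure mu _ _ ball_x_sub) _.
  apply: le_trans (mu_ball_double_iter _ _ (mulr_gt0 eps0 d0)) _.
  apply: lee_wpmul2l; first by rewrite lee_fin exprn_ge0 // ltW.
  exact: (le_outer_measure mu _ _ ball_y_sub).
have := ratio_small r; rewrite r0 re => /(_ isT); apply/negP; rewrite -leNgt.
apply: invr_le_fine_ratio => //; [by rewrite exprn_gt0 | exact: outer_measure_ge0 |].
exact: (le_outer_measure mu _ _ (@subDsetl _ _ _)).
Qed.

End doubling_density.

Lemma quasi_nearest_retraction (R : realType) (X : Type) (rho : X -> X -> R)
    (U : set X) (err : X -> R) :
  (forall y z, 0 <= rho y z) -> U !=set0 -> (forall y, ~ U y -> 0 < err y) ->
  exists f : X -> X, [/\ forall y, U (f y), forall y, U y -> f y = y &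
    forall y z, ~ U y -> U z -> rho y (f y) < rho y z + err y].
Proof.
move=> rho_ge0 [u Uu] err_gt0.
have dist_inf y : has_inf [set rho y w | w in U].
  by split; [exists (rho y u), u | exists 0 => _ [w _ <-]].
have near_point y : exists w, [/\ U w, U y -> w = y &
    ~ U y -> rho y w < inf [set rho y w | w in U] + err y].
  have [Uy|Uy] := pselect (U y); first by exists y.
  by have [_ [w Uw <-] near_w] := inf_adherent (err_gt0 _ Uy) (dist_inf y); exists w.
have [f fP] := choice near_point.
exists f; split=> [y|y|y z Uy Uz]; [by case: (fP y) | by case: (fP y) |].
have [_ _ /(_ Uy) near_y] := fP y; apply: (lt_le_trans near_y).
by rewrite lerD2r ge_inf //; [case: (dist_inf y) | exists z].
Qed.

Theorem proposition2p3 (R : realType) (X : Type) (K : R) (rho : X -> X -> R)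
  (mu : {outer_measure set X -> \bar R}) (U : set X) (x : X) :
  doubling_mms K rho mu ->
  U !=set0 ->
  mu_interior_point rho mu U x ->
  exists r_x : X -> X,
    [/\ forall y, U (r_x y),
        forall y, U y -> r_x y = y &
        forall eps : R, 0 < eps -> exists2 delta : R, 0 < delta &
          forall y, rho y x < delta -> rho y (r_x y) <= eps * rho y x].
Proof.
move=> [K0 rho_metric _ _ mu_ball] U0 [Ux [B [_ BU density1]]].
have [rho_ge0 rho0 _ _] := rho_metric.
have dist_x_gt0 y : ~ U y -> 0 < rho y x.
  by move=> Uy; rewrite lt0r rho_ge0 andbT; apply: contra_notN Uy => /eqP/rho0 ->.
have [f [Uf fU f_near]] := quasi_nearest_retraction (err := fun y => rho y x ^+ 2)
  rho_ge0 U0 (fun y Uy => exprn_gt0 2 (dist_x_gt0 y Uy)).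
exists f; split => // eps eps0.
have [d1 d1_gt0 approxB] :=
  density_point_approx K0 rho_metric mu_ball density1 (divr_gt0 eps0 (ltr0Sn _ 1)).
exists (Num.min d1 (eps / 2)); first by rewrite lt_min d1_gt0 divr_gt0.
move=> y; rewrite lt_min => /andP[yd1 yeps].
have [Uy|Uy] := pselect (U y).
  by rewrite fU // (proj2 (rho0 y y) erefl) mulr_ge0 ?rho_ge0 ?ltW.
have d0 := dist_x_gt0 y Uy.
have [|z /BU Uz yz] := approxB y; first by rewrite d0 yd1.
have sq_small : rho y x ^+ 2 <= eps / 2 * rho y x by rewrite expr2 ler_wpM2r ?ltW.
by have := f_near y z Uy Uz; lra.
Qed.
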